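(* Let $X_1,\ldots,X_n$ be independent real random variables, let $\sigma>0$ and $w>0$, and assume that each $X_i/\sigma$ has a continuous density bounded above by $w$. Let $S=\sum_{i=1}^nX_i^2$. Then for every $x>0$, $$\mathbb{P}(S\leq\sigma^2x)\leq\exp\Big[\frac n2\Big\{1+\log(2\pi w^2)-\log\Big(\frac nx\Big)\Big\}\Big].$$ *)

From HB Require Import structures.
From mathcomp Require Import all_boot all_order all_algebra.
From mathcomp Require Import all_classical all_reals all_analysis.
Set Implicit Arguments. Unset Strict Implicit. Unset Printing Implicit Defensive.
Import Order.TTheory GRing.Theory Num.Theory.
Import numFieldNormedType.Exports.
Local Open Scope classical_set_scope.
Local Open Scope ring_scope.

(* Taking
   B i = setT for the unused indices, this covers all subfamilies. *)
Definition mutually_independent d (T : measurableType d) (R : realType)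
  (P : probability T R) (n : nat) (X : 'I_n -> T -> R) : Prop :=
  forall B : 'I_n -> set R, (forall i, measurable (B i)) ->
    P (\bigcap_(i in [set: 'I_n]) (X i @^-1` B i)) =
    (\prod_(i < n) P (X i @^-1` B i))%E.

Definition has_cont_density_bounded_by d (T : measurableType d)
  (R : realType) (P : probability T R) (Y : T -> R) (w : R) : Prop :=
  exists f : R -> R,
    continuous f /\ (forall x, 0 <= f x <= w) /\
    forall B : set R, measurable B ->
      P (Y @^-1` B) = (\int[@lebesgue_measure R]_(x in B) (f x)%:E)%E.

From HB Require Import structures.
From mathcomp Require Import all_boot all_order all_algebra.
From mathcomp Require Import all_classical all_reals all_analysis.
From mathcomp Require Import ring lra measurable_realfun.
Import Order.TTheory GRing.Theory Num.Theory.
Import numFieldNormedType.Exports.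
Local Open Scope classical_set_scope.
Local Open Scope ring_scope.

(* A Chernoff bound with a Gaussian tilt.  For s > 0 and Y_i = X_i / sigma,
   P(sum Y_i^2 <= x) <= e^(x / 2s^2) E[prod_i e^(-Y_i^2 / 2s^2)], the
   expectation factorizes by independence, and each factor is at most
   w * int e^(-y^2 / 2s^2) dy = w sqrt(2 pi) s; the choice s^2 = x / n gives the
   bound.  Independence is only assumed for events, so the expectation of the
   product is replaced by a sum over a grid: Y_i^2 is rounded down to a multiple
   of delta, which costs a factor e^(n delta / 2s^2) that vanishes as
   delta -> 0. *)

Section sqr_bucket.
Context {R : realType}.

Definition sqr_bucket (δ : R) (j : nat) : set R :=
  (fun y : R => y ^+ 2) @^-1` `[j%:R * δ, j.+1%:R * δ[%classic.

Lemma sqr_bucketE δ j y :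
  sqr_bucket δ j y <-> (j%:R * δ <= y ^+ 2 < j.+1%:R * δ).
Proof. by rewrite /sqr_bucket /preimage /= in_itv. Qed.

Lemma measurable_sqr_bucket_comp dT (T : measurableType dT) (g : T -> R) δ j :
  measurable_fun setT g -> measurable (g @^-1` sqr_bucket δ j).
Proof.
move=> mg; rewrite -[_ @^-1` _]setTI.
exact: (measurable_funX 2 mg) measurableT _ (measurable_itv _).
Qed.

Lemma measurable_sqr_bucket δ j : measurable (sqr_bucket δ j).
Proof. exact: (@measurable_sqr_bucket_comp _ _ id). Qed.

Lemma sqr_bucket_uniq δ i j y :
  0 < δ -> sqr_bucket δ i y -> sqr_bucket δ j y -> i = j.
Proof.
move=> δ0 /sqr_bucketE/andP[lo_i hi_i] /sqr_bucketE/andP[lo_j hi_j].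
have lt_suc a b : a%:R * δ < b.+1%:R * δ -> (a <= b)%N.
  by rewrite ltr_pM2r // ltr_nat ltnS.
apply/eqP; rewrite eqn_leq.
by rewrite !lt_suc ?(le_lt_trans lo_i hi_j) ?(le_lt_trans lo_j hi_i).
Qed.

Lemma sqr_bucket_truncn δ y :
  0 < δ -> sqr_bucket δ (Num.truncn (y ^+ 2 / δ)) y.
Proof.
move=> δ0; apply/sqr_bucketE.
have /andP[] := truncn_itv (divr_ge0 (sqr_ge0 y) (ltW δ0)).
by rewrite ler_pdivlMr // ltr_pdivrMr // => -> ->.
Qed.

Lemma sum_integral_sqr_bucket_le (g : R -> R) δ K :
    0 < δ -> measurable_fun setT g -> (forall y, 0 <= g y) ->
  (\sum_(j < K) \int[lebesgue_measure]_(y in sqr_bucket δ j) (g y)%:E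
   <= \int[lebesgue_measure]_y (g y)%:E)%E.
Proof.
move=> δ0 mg g0.
have mgE : measurable_fun setT (EFin \o g) by exact/measurable_EFinP.
have disj : trivIset [set` iota 0 K] (sqr_bucket δ).
  by move=> i j _ _ [y [yi yj]]; exact: sqr_bucket_uniq δ0 yi yj.
rewrite -(big_mkord xpredT
  (fun j => \int[lebesgue_measure]_(y in sqr_bucket δ j) (g y)%:E)%E).
rewrite /index_iota subn0 -(ge0_integral_bigsetU lebesgue_measure
  (measurable_sqr_bucket δ) (iota_uniq 0 K) disj (measurable_funTS mgE)
  (fun y _ => g0 y)).
apply: ge0_subset_integral (@subsetT _ _) => //;
  last by move=> y _; rewrite lee_fin.
by apply: bigsetU_measurable => j _; exact: measurable_sqr_bucket.
Qed.

Lemma tilted_sqr_bucket_mass_le (f : R -> R) (w s δ : R) (K : nat) :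
    measurable_fun setT f -> (forall y, 0 <= f y <= w) -> 0 < s -> 0 < δ ->
  (\sum_(j < K) (expR (- (j%:R * δ) / (s ^+ 2 *+ 2)))%:E *
      \int[lebesgue_measure]_(y in sqr_bucket δ j) (f y)%:E
   <= (expR (δ / (s ^+ 2 *+ 2)) * w / normal_peak s)%:E)%E.
Proof.
move=> mf fw s0 δ0; set D := s ^+ 2 *+ 2.
have D0 : 0 < D by rewrite pmulrn_lgt0 // exprn_gt0.
have peak0 : 0 < normal_peak s by rewrite normal_peak_gt0 // gt_eqF.
have f0 y : 0 <= f y by case/andP: (fw y).
have w0 : 0 <= w := le_trans (f0 0) (proj2 (andP (fw 0))).
set M := expR (δ / D) * w / normal_peak s.
have M0 : 0 <= M by rewrite divr_ge0 ?mulr_ge0 ?expR_ge0 ?(ltW peak0).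
pose g y := M * normal_pdf 0 s y.
have mg : measurable_fun setT g.
  by apply: measurable_funM; last exact: measurable_normal_pdf.
have g0 y : 0 <= g y by rewrite mulr_ge0 ?normal_pdf_ge0.
have tilt_le j y : sqr_bucket δ j y -> expR (- (j%:R * δ) / D) * f y <= g y.
  move=> /sqr_bucketE/andP[_ hi]; rewrite /g normal_pdfE ?gt_eqF //.
  rewrite /M mulrA divfK ?gt_eqF // mulrAC ler_pM ?expR_ge0 //; last first.
    by case/andP: (fw y).
  rewrite /normal_fun -expRD ler_expR subr0 -!mulNr -mulrDl.
  rewrite ler_wpM2r ?invr_ge0 ?ltW //.
  by move: hi; rewrite -natr1 mulrDl mul1r; nra.
apply: le_trans (_ : \sum_(j < K) \int[lebesgue_measure]_(y in sqr_bucket δ j)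
    (g y)%:E <= _)%E.
  apply: lee_sum => j _.
  rewrite -ge0_integralZl_EFin //; last 3 first.
  - exact: measurable_sqr_bucket.
  - by move=> y _; rewrite lee_fin.
  - exact/measurable_EFinP/measurable_funTS.
  apply: ge0_le_integral => //.
  - exact: measurable_sqr_bucket.
  - by move=> y _; rewrite lee_fin mulr_ge0 ?expR_ge0.
  - by apply/measurable_EFinP/measurable_funTS/measurable_funM.
  - exact/measurable_EFinP/measurable_funTS.
  by move=> y /tilt_le; rewrite lee_fin.
apply: le_trans (sum_integral_sqr_bucket_le _ _ K δ0 mg g0) _.
under eq_integral do rewrite EFinM.
rewrite ge0_integralZl_EFin //; last 2 first.
- by move=> y _; rewrite lee_fin normal_pdf_ge0.
- by apply/measurable_EFinP; exact: measurable_normal_pdf.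
by rewrite integral_normal_pdf mule1.
Qed.

End sqr_bucket.

Section exponential_tilting.
Context {R : realType}.

Lemma le_of_forall_le_mul_expR (a b c : R) : 0 <= c ->
  (forall δ, 0 < δ -> a <= b * expR (c * δ)) -> a <= b.
Proof.
move=> c_ge0 ab; have [b_le0|b_gt0] := lerP b 0.
  have := ab 1 ltr01; have := expR_ge1Dx (c * 1); nra.
have [c_eq0|c0] := eqVneq c 0.
  by have := ab 1 ltr01; rewrite c_eq0 mul0r expR0 mulr1.
have c_gt0 : 0 < c by rewrite lt_def c0.
apply/ler_addgt0Pr => e e0.
have gt1 : 1 < 1 + e / b by rewrite ltrDl divr_gt0.
have := ab (ln (1 + e / b) / c) (divr_gt0 (ln_gt0 gt1) c_gt0).
rewrite [c * _]mulrC divfK ?gt_eqF // lnK ?posrE ?(lt_trans ltr01 gt1) //.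
by rewrite mulrDr mulr1 mulrCA divff ?gt_eqF // mulr1.
Qed.

Lemma sum_prod_le_expR_tilted (I : finType) (K : nat) (a : I -> nat -> R)
    (δ x D : R) : 0 < D -> (forall i j, 0 <= a i j) ->
  \sum_(k : {ffun I -> 'I_K} | \sum_i (k i)%:R * δ <= x) \prod_i a i (k i)
  <= expR (x / D) * \prod_i \sum_(j < K) expR (- (j%:R * δ) / D) * a i j.
Proof.
move=> D0 a0; have ca0 i j : 0 <= expR (- (j%:R * δ) / D) * a i j.
  by rewrite mulr_ge0 ?expR_ge0.
rewrite bigA_distr_bigA mulr_sumr [leRHS](bigID (fun k : {ffun I -> 'I_K} =>
  \sum_i (k i)%:R * δ <= x)) /=.
apply: ler_wpDr.
  by apply: sumr_ge0 => k _; rewrite mulr_ge0 ?expR_ge0 ?prodr_ge0.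
apply: ler_sum => k kx; rewrite big_split /= mulrA -expR_sum -expRD.
rewrite ler_peMl ?prodr_ge0 //; apply: le_trans (expR_ge1Dx _); rewrite lerDl.
by rewrite -mulr_suml sumrN -mulrDl divr_ge0 ?subr_ge0 ?(ltW D0).
Qed.

Lemma gaussian_tilt_bound_at_optimum (n : nat) (w x : R) :
    (0 < n)%N -> 0 < w -> 0 < x ->
  let s := Num.sqrt (x / n%:R) in
  expR (x / (s ^+ 2 *+ 2)) * (w / normal_peak s) ^+ n =
  expR (n%:R / 2 * (1 + ln (2 * pi * w ^+ 2) - ln (n%:R / x))).
Proof.
move=> n_gt0 w0 x0 s; have n0 : 0 < n%:R :> R by rewrite ltr0n.
have xn0 : 0 < x / n%:R by rewrite divr_gt0.
have s2 : s ^+ 2 = x / n%:R by rewrite sqr_sqrtr // ltW.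
have s0 : 0 < s by rewrite sqrtr_gt0.
set m := w / normal_peak s.
have m0 : 0 < m by rewrite divr_gt0 // normal_peak_gt0 // gt_eqF.
have pw0 : 0 < 2 * pi * w ^+ 2 by rewrite !mulr_gt0 ?pi_gt0 ?exprn_gt0.
have nx0 : 0 < n%:R / x by rewrite divr_gt0.
have m2 : m ^+ 2 = 2 * pi * w ^+ 2 / (n%:R / x).
  rewrite /m /normal_peak invrK exprMn sqr_sqrtr; last first.
    by rewrite mulrn_wge0 // mulr_ge0 ?pi_ge0 // sqr_ge0.
  by rewrite s2 invf_div -mulr_natr; field; rewrite gt_eqF.
have lnm : ln m = (ln (2 * pi * w ^+ 2) - ln (n%:R / x)) / 2.
  have := lnXn 2 m0; rewrite m2 lnM ?posrE ?invr_gt0 // lnV ?posrE // => ->.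
  by rewrite mulr2n; field.
rewrite -[m]lnK ?posrE // -expRM_natl -expRD lnm s2; congr expR.
by field; rewrite !gt_eqF.
Qed.

End exponential_tilting.

Section sum_of_squares.
Context {d : measure_display} {T : measurableType d} {R : realType}.
Context (P : probability T R) {n : nat}.

Lemma mutually_independent_comp (X : 'I_n -> T -> R) (g : 'I_n -> R -> R) :
  (forall i, measurable_fun setT (g i)) ->
  mutually_independent P X -> mutually_independent P (fun i => g i \o X i).
Proof.
move=> mg indX B mB; apply: (indX (fun i => g i @^-1` B i)) => i.
by rewrite -[_ @^-1` _]setTI; exact: mg.
Qed.

Lemma measurable_sumsq_le (Y : 'I_n -> T -> R) (a : R) :
  (forall i, measurable_fun setT (Y i)) ->
  measurable [set t | \sum_i Y i t ^+ 2 <= a].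
Proof.
move=> mY; have mS : measurable_fun setT (fun t => \sum_i Y i t ^+ 2).
  by apply: measurable_sum => i; exact: measurable_funX.
have := mS measurableT _ (measurable_itv `]-oo, a]).
by rewrite setTI; congr measurable; apply/seteqP; split => t /=; rewrite in_itv.
Qed.

Lemma prob_sumsq_le_sum_prod_sqr_bucket (Y : 'I_n -> T -> R) (δ x : R) :
    0 < δ -> (forall i, measurable_fun setT (Y i)) ->
    mutually_independent P Y ->
  (P [set t | (\sum_i Y i t ^+ 2 <= x)%R] <=
   \sum_(k : {ffun 'I_n -> 'I_(Num.truncn (x / δ)).+1} |
          (\sum_i (k i)%:R * δ <= x)%R)
     \prod_i P (Y i @^-1` sqr_bucket δ (k i)))%E.
Proof.
move=> δ0 mY indY; set K := (Num.truncn (x / δ)).+1.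
pose cell (k : {ffun 'I_n -> 'I_K}) :=
  \bigcap_(i in [set: 'I_n]) Y i @^-1` sqr_bucket δ (k i).
pose admissible : {pred {ffun 'I_n -> 'I_K}} :=
  [pred k : {ffun 'I_n -> 'I_K} | \sum_i (k i)%:R * δ <= x].
have mcell k : measurable (cell k).
  by apply: fin_bigcap_measurable => // i _; exact: measurable_sqr_bucket_comp.
have cover : [set t | \sum_i Y i t ^+ 2 <= x] `<=`
    \bigcup_(k in [set` admissible]) cell k.
  move=> t /= sx.
  have Yx i : Y i t ^+ 2 <= x.
    apply: le_trans sx; rewrite (bigD1 i) //= lerDl.
    by apply: sumr_ge0 => j _; exact: sqr_ge0.
  have kK i : (Num.truncn (Y i t ^+ 2 / δ) < K)%N.
    by rewrite ltnS le_truncn // ler_wpM2r // invr_ge0 ltW.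
  exists [ffun i => Ordinal (kK i)].
    apply: le_trans sx; apply: ler_sum => i _; rewrite ffunE /=.
    by have /sqr_bucketE/andP[] := sqr_bucket_truncn _ (Y i t) δ0.
  by move=> i _; rewrite /= ffunE; exact: sqr_bucket_truncn.
have disj : trivIset [set` admissible] cell.
  move=> k1 k2 _ _ [t [c1 c2]]; apply/ffunP => i; apply/val_inj.
  exact: sqr_bucket_uniq δ0 (c1 i Logic.I) (c2 i Logic.I).
apply: le_trans (le_measure P _ _ cover) _.
- by rewrite inE; exact: measurable_sumsq_le.
- rewrite inE; apply: fin_bigcup_measurable => [|k _]; last exact: mcell.
  exact: finite_finset.
rewrite measure_fin_bigcup; last 3 first.
- exact: finite_finset.
- exact: disj.
- by move=> k _; exact: mcell.
rewrite -(@bigfs _ _ _ _ (index_enum _) admissible) ?index_enum_uniq //;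
  last by move=> k _; rewrite mem_index_enum.
apply: lee_sum => k _; rewrite le_eqVlt; apply/orP; left; apply/eqP.
by apply: indY => i; exact: measurable_sqr_bucket.
Qed.

Lemma prob_sumsq_le_gaussian_tilt (Y : 'I_n -> T -> R) (w x s : R) :
    0 < s -> (forall i, measurable_fun setT (Y i)) ->
    mutually_independent P Y ->
    (forall i, has_cont_density_bounded_by P (Y i) w) ->
  (P [set t | (\sum_i Y i t ^+ 2 <= x)%R] <=
   (expR (x / (s ^+ 2 *+ 2)) * (w / normal_peak s) ^+ n)%:E)%E.
Proof.
move=> s0 mY indY dens; set D := s ^+ 2 *+ 2.
have D0 : 0 < D by rewrite pmulrn_lgt0 // exprn_gt0.
have mE := measurable_sumsq_le Y x mY.
rewrite -(fineK (fin_num_measure P _ mE)) lee_fin.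
apply: (@le_of_forall_le_mul_expR _ _ _ (n%:R / D)).
  by rewrite divr_ge0 ?ler0n ?(ltW D0).
move=> δ δ0; rewrite -lee_fin fineK ?fin_num_measure //.
apply: le_trans (prob_sumsq_le_sum_prod_sqr_bucket _ _ x δ0 mY indY) _.
pose p i j := fine (P (Y i @^-1` sqr_bucket δ j)).
have Pp i j : P (Y i @^-1` sqr_bucket δ j) = (p i j)%:E.
  by rewrite fineK // fin_num_measure //; exact: measurable_sqr_bucket_comp.
under eq_bigr do under eq_bigr do rewrite Pp.
under eq_bigr do rewrite prodEFin.
rewrite sumEFin lee_fin.
have p0 i j : 0 <= p i j by rewrite fine_ge0.
apply: le_trans (sum_prod_le_expR_tilted _ _ _ _ _ _ D0 p0) _.
have -> : n%:R / D * δ = n%:R * (δ / D) by rewrite mulrAC mulrA.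
rewrite -mulrA ler_wpM2l ?expR_ge0 // expRM_natl -exprMn.
have -> : (w / normal_peak s * expR (δ / D)) ^+ n =
    \prod_(i < n) (expR (δ / D) * w / normal_peak s).
  by rewrite prodr_const card_ord mulrC mulrA.
apply: ler_prod => i _; apply/andP; split.
  by apply: sumr_ge0 => j _; rewrite mulr_ge0 ?expR_ge0.
have [f [cf [fw fP]]] := dens i.
rewrite -lee_fin -sumEFin.
under eq_bigr do rewrite EFinM -Pp (fP _ (measurable_sqr_bucket _ _)).
exact: tilted_sqr_bucket_mass_le (continuous_measurable_fun cf) fw s0 δ0.
Qed.

End sum_of_squares.

Theorem lemma1 (d : measure_display) (T : measurableType d) (R : realType)
  (P : probability T R) (n : nat) (X : 'I_n -> {RV P >-> R}) (sigma w : R)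
  (hsigma : 0 < sigma) (hw : 0 < w)
  (hindep : mutually_independent P (fun i => (X i : T -> R)))
  (hdens : forall i, has_cont_density_bounded_by P (fun t => X i t / sigma) w)
  (x : R) (hx : 0 < x) :
  (P [set t | (\sum_(i < n) (X i t) ^+ 2 <= sigma ^+ 2 * x)%R]
   <= (expR (n%:R / 2 * (1 + ln (2 * pi * w ^+ 2) - ln (n%:R / x))))%:E)%E.
Proof.
pose Y i t := X i t / sigma.
have mY i : measurable_fun setT (Y i) by apply: measurable_funM.
have indY : mutually_independent P Y.
  apply: (mutually_independent_comp P _ (fun _ y => y / sigma)) hindep => i.
  exact: measurable_funM.
have -> : [set t | \sum_i X i t ^+ 2 <= sigma ^+ 2 * x] =
    [set t | \sum_i Y i t ^+ 2 <= x].
  apply: eq_set => t; rewrite /Y; under [in RHS]eq_bigr do rewrite expr_div_n.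
  by rewrite -mulr_suml ler_pdivrMr ?exprn_gt0 // mulrC.
have [n0|n_gt0] := posnP n.
  have -> : n%:R = 0 :> R by rewrite n0.
  rewrite !mul0r expR0; apply: probability_le1; exact: measurable_sumsq_le.
rewrite -gaussian_tilt_bound_at_optimum //.
by apply: prob_sumsq_le_gaussian_tilt; rewrite ?sqrtr_gt0 ?divr_gt0 ?ltr0n.
Qed.
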